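(* Let $X$ be a finite set with $|X|\ge5$, $k$ an integer with $5<k<|X|-5$, $\mathfrak{C}$ a nonempty symmetric family of choice functions for $\binom{X}{k}$, $\mathcal{F}$ the set of simple averaging functions for $\mathfrak{C}$, and assume $r(\mathcal{F})=2$. Let $\bar a^*=(a^*_1,a^*_2,a^*_3,a^*_4)\in X^4$ be without repetition. Then there is $g\in\mathcal{F}_{[4]}$ such that $g(\bar b)=b_1$ for every $\bar b\in X^4$ with a repetition, and $g(\bar a^* )=a^*_2$.
   Context: $\binom{X}{k}=\{Y\subseteq X:|Y|=k\}$; choice functions satisfy $c(Y)\in Y$. Symmetric: closed under $c\mapsto\pi*c$, $(\pi*c)(Y)=\pi^{-1}(c(\pi(Y)))$. $\mathcal{F}_{[r]}$: functions $f:X^r\to X$ with $f(a,\dots,a)=a$ such that for all $c_1,\dots,c_r\in\mathfrak{C}$, $Y\mapsto f(c_1(Y),\dots,c_r(Y))$ is in $\mathfrak{C}$. A monarchy is a projection. $r(\mathcal{F})=\min\{r:\text{some } f\in\mathcal{F}_{[r]}\text{ is not a monarchy}\}$. *)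

From mathcomp Require Import all_boot all_fingroup.
Set Implicit Arguments. Unset Strict Implicit. Unset Printing Implicit Defensive.

Section Defs.
Variables (X : finType) (k : nat).

Definition kset := {Y : {set X} | #|Y| == k}.

Definition choice_fun (c : {ffun kset -> X}) : Prop :=
  forall Y : kset, c Y \in sval Y.

Lemma kimg_card (p : {perm X}) (Y : kset) : #|p @: sval Y| == k.
Proof. by rewrite card_imset; [exact: (svalP Y) | exact: perm_inj]. Qed.

Definition kimg (p : {perm X}) (Y : kset) : kset := exist _ (p @: sval Y) (kimg_card p Y).

Definition pact (p : {perm X}) (c : {ffun kset -> X}) : {ffun kset -> X} :=
  [ffun Y => (p^-1)%g (c (kimg p Y))].

Definition choice_family (C : {set {ffun kset -> X}}) : Prop :=
  forall c, c \in C -> choice_fun c.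

Definition symmetric_family (C : {set {ffun kset -> X}}) : Prop :=
  forall (p : {perm X}) c, c \in C -> pact p c \in C.

Definition Fr (C : {set {ffun kset -> X}}) (r : nat) (f : {ffun 'I_r -> X} -> X) : Prop :=
  (forall a : X, f [ffun _ => a] = a) /\
  (forall cs : 'I_r -> {ffun kset -> X}, (forall i, cs i \in C) ->
     [ffun Y => f [ffun i => cs i Y]] \in C).

Definition monarchy (r : nat) (f : {ffun 'I_r -> X} -> X) : Prop :=
  exists i : 'I_r, forall x, f x = x i.

Definition rF_eq (C : {set {ffun kset -> X}}) (r : nat) : Prop :=
  (exists f : {ffun 'I_r -> X} -> X, Fr C f /\ ~ monarchy f) /\
  (forall r' (f : {ffun 'I_r' -> X} -> X), r' < r -> Fr C f -> monarchy f).

End Defs.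

From mathcomp Require Import all_boot all_fingroup.
Set Implicit Arguments. Unset Strict Implicit. Unset Printing Implicit Defensive.

(* Every binary member of F_[2] is conservative, so it is described by the set of pairs
   (x, y), x <> y, on which it returns y; call such sets realizable.  Realizable sets are
   closed under union, intersection, S |-> {(x, y) | (y, x) \notin S} and conjugation by
   permutations of X.  A non-monarchy gives a realizable S containing some pair and missing
   another.  The intersection of the conjugates of S that contain (p, q) is realizable and
   invariant under the pointwise stabiliser of p and q, hence a union of the seven orbits of
   that stabiliser on pairs of distinct points; a finite search over such unions shows that
   {(p, q), (q, p)} is then realizable, i.e. F_[2] contains the function returning its
   second argument exactly on the pairs (p, q) and (q, p).  Three of these functions compose
   into a 4-ary function that returns its first argument everywhere except at a*. *)

Lemma exists_notin (T : finType) (s : seq T) : size s < #|T| -> exists z, z \notin s.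
Proof.
move=> hs; apply/existsP; rewrite -negb_forall; apply: contraTN hs => /forallP hT.
rewrite -leqNgt (leq_trans _ (card_size s)) // subset_leq_card //.
by apply/subsetP => z _; apply: hT.
Qed.

Lemma perm_of_uniq (T : finType) (s t : seq T) :
  uniq s -> uniq t -> size s = size t -> exists pi : {perm T}, map pi s = t.
Proof.
elim: s t => [|x s IHs] [|y t] //=; first by exists 1%g.
move=> /andP[xs us] /andP[yt ut] [st]; have [pi pis] := IHs t us ut st.
exists (pi * tperm (pi x) y)%g; rewrite permM tpermL -pis; congr (_ :: _).
apply/eq_in_map => u us'; rewrite permM tpermD //.
  by rewrite (inj_eq perm_inj); apply: contraNneq xs => ->.
by apply: contraNneq yt => ->; rewrite -pis map_f.
Qed.

Lemma tperm2_fix (T : finType) (F : pred T) (x y x' y' : T) :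
  x != y -> x' != y' -> {in F, forall u, (x == u) = (x' == u) /\ (y == u) = (y' == u)} ->
  exists s : {perm T}, [/\ s x = x', s y = y' & {in F, forall u, s u = u}].
Proof.
move=> xy xy' pat; pose t := tperm x x'.
have tF u : F u -> t u = u.
  move=> /pat[xu _]; rewrite /t; case: tpermP => // [ux|ux'].
    by apply/eqP; rewrite -xu ux.
  by apply/eqP; rewrite xu ux'.
exists (t * tperm (t y) y')%g; split; rewrite ?permM.
- have tyx' : t y != x' by rewrite -[x' in _ != x'](tpermL x x') (inj_eq perm_inj) eq_sym.
  by rewrite tpermL tpermD // eq_sym.
- exact: tpermL.
move=> u uF; rewrite permM (tF _ uF); case: (tpermP (t y) y' u) => [uty|uy'|//].
  have uy : u = y by rewrite -(tF _ uF) uty tpermK.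
  by have [_ yu] := pat _ uF; apply/eqP; rewrite -yu uy.
have [_ yu] := pat _ uF.
by apply/eqP; rewrite -(tF _ uF) (inj_eq perm_inj) yu uy'.
Qed.

Section KSets.
Variables (X : finType) (k : nat).

Lemma kset_inhabited : k <= #|X| -> inhabited (kset X k).
Proof.
move=> hk; have cY : #|[set x in take k (enum X)]| == k.
  by rewrite cardsE (card_uniqP (take_uniq k (enum_uniq X))) size_takel // -cardE.
by constructor; exists [set x in take k (enum X)].
Qed.

Lemma kimgK (p : {perm X}) (Y : kset X k) : kimg p^-1 (kimg p Y) = Y.
Proof. by apply: val_inj; rewrite /= -imset_comp (eq_imset _ (permK p)) imset_id. Qed.

Lemma pact_kimg (p : {perm X}) c (Y : kset X k) : pact p^-1 c (kimg p Y) = p (c Y).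
Proof. by rewrite ffunE invgK kimgK. Qed.

End KSets.

Section Clone.
Variables (X : finType) (k : nat) (C : {set {ffun kset X k -> X}}).

Lemma Fr_ext r (f g : {ffun 'I_r -> X} -> X) : f =1 g -> Fr C f -> Fr C g.
Proof.
move=> fg [f_id f_C]; split=> [a|cs csC]; first by rewrite -fg.
by have := f_C cs csC; congr (_ \in C); apply/ffunP => Y; rewrite !ffunE fg.
Qed.

Lemma Fr_proj r (i : 'I_r) : Fr C (fun x => x i).
Proof.
split=> [a|cs csC]; first by rewrite ffunE.
by have -> : [ffun Y => [ffun j => cs j Y] i] = cs i by apply/ffunP => Y; rewrite !ffunE.
Qed.

Lemma Fr_comp r m (g : {ffun 'I_m -> X} -> X) (hs : 'I_m -> {ffun 'I_r -> X} -> X) :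
  Fr C g -> (forall j, Fr C (hs j)) -> Fr C (fun x => g [ffun j => hs j x]).
Proof.
move=> [g_id g_C] hsF; split=> [a|cs csC].
  rewrite -[RHS]g_id; congr g; apply/ffunP => j; rewrite !ffunE.
  by case: (hsF j) => ->.
have := g_C (fun j => [ffun Y => hs j [ffun i => cs i Y]]) (fun j => (hsF j).2 cs csC).
by congr (_ \in C); apply/ffunP => Y; rewrite !ffunE; congr g; apply/ffunP => j; rewrite !ffunE.
Qed.

Definition pair2 (a b : X) : {ffun 'I_2 -> X} := [ffun i => if i == ord0 then a else b].

Definition bin (h : {ffun 'I_2 -> X} -> X) a b := h (pair2 a b).

Lemma pair2_eta (x : {ffun 'I_2 -> X}) : x = pair2 (x ord0) (x ord_max).
Proof. by apply/ffunP => -[[|[|//]] i2]; rewrite ffunE /=; congr (x _); apply: val_inj. Qed.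

Lemma bin_idem h a : Fr C h -> bin h a a = a.
Proof.
by case=> h_id _; rewrite -[RHS]h_id; congr h; apply/ffunP => i; rewrite !ffunE if_same.
Qed.

Lemma Fr_bin r (h : {ffun 'I_2 -> X} -> X) (u v : {ffun 'I_r -> X} -> X) :
  Fr C h -> Fr C u -> Fr C v -> Fr C (fun x => bin h (u x) (v x)).
Proof.
move=> hF uF vF; apply: Fr_ext (Fr_comp (hs := fun j => if j == ord0 then u else v) hF _).
  by move=> x; rewrite /bin /pair2; congr h; apply/ffunP => j; rewrite !ffunE; case: ifP.
by move=> j; case: ifP.
Qed.

Hypothesis hCs : symmetric_family C.

Lemma Fr_conj r (p : {perm X}) (f : {ffun 'I_r -> X} -> X) :
  Fr C f -> Fr C (fun x => (p^-1)%g (f [ffun i => p (x i)])).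
Proof.
move=> [f_id f_C]; split=> [a|cs csC].
  have -> : [ffun i => p ([ffun _ : 'I_r => a] i)] = [ffun _ => p a].
    by apply/ffunP => i; rewrite !ffunE.
  by rewrite f_id permK.
have := hCs p (f_C (fun i => pact p^-1 (cs i)) (fun i => hCs _ (csC i))).
congr (_ \in C); apply/ffunP => Y; rewrite !ffunE; congr (_ _); congr f.
by apply/ffunP => i; rewrite !ffunE invgK kimgK.
Qed.

End Clone.

Section Conservative.
Variables (X : finType) (k : nat) (C : {set {ffun kset X k -> X}}).
Hypotheses (hCs : symmetric_family C) (hCc : choice_family C) (hC0 : C != set0).
Hypotheses (hk : 1 < k) (hkX : k < #|X|).

Lemma kset_other (Y : kset X k) x : exists2 y, y \in sval Y & y != x.
Proof.
have /card_gt1P[u [v [uY vY uv]]] : 1 < #|sval Y| by rewrite (eqP (svalP Y)).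
by case: (eqVneq u x) => [ux|]; [exists v; rewrite // -ux eq_sym | exists u].
Qed.

Lemma kset_outside (Y : kset X k) : exists w, w \notin sval Y.
Proof.
have [|w] := @exists_notin _ (enum (sval Y)); first by rewrite -cardE (eqP (svalP Y)).
by rewrite mem_enum; exists w.
Qed.

(* If [h a b = z] lay outside [{a, b}], conjugating one choice function so that it picks
   [a] and [b] on the same k-set, which misses [z], would make [h] violate the choice
   property. *)
Lemma Fr2_conservative h a b : Fr C h -> bin h a b = a \/ bin h a b = b.
Proof.
move=> hF; have [<-|ab] := eqVneq a b; first by left; exact: bin_idem hF.
set z := bin h a b; have [|za] := eqVneq z a; first by left.
have [|zb] := eqVneq z b; first by right.
exfalso; have /set0Pn[c0 c0C] := hC0; have [Y0] := kset_inhabited (ltnW hkX).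
set x0 := c0 Y0; have x0Y0 : x0 \in sval Y0 := hCc c0C Y0.
have [y0 y0Y0 y0x0] := kset_other Y0 x0; have [w wY0] := kset_outside Y0.
have uniq_s : uniq [:: x0; y0; w].
  have wx0 : x0 != w by apply: contraNneq wY0 => <-.
  have wy0 : y0 != w by apply: contraNneq wY0 => <-.
  by rewrite /= !inE !negb_or eq_sym y0x0 wx0 wy0.
have uniq_t : uniq [:: a; b; z] by rewrite /= !inE !negb_or ab eq_sym za eq_sym zb.
have [pi [pix0 piy0 piw]] := perm_of_uniq uniq_s uniq_t erefl.
pose pi' := (tperm x0 y0 * pi)%g; pose Y := kimg pi Y0.
have eY : kimg pi' Y0 = Y.
  apply: val_inj; rewrite /= /pi' -[in RHS](im_perm_on (S := sval Y0) (u := tperm x0 y0)).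
    by rewrite -imset_comp; apply: eq_imset => u; rewrite permM.
  by apply: subset_trans (tperm_on x0 y0) _; apply/subsetP => u; rewrite !inE => /orP[]/eqP->.
pose cs (i : 'I_2) := if i == ord0 then pact pi^-1 c0 else pact pi'^-1 c0.
have csC i : cs i \in C by rewrite /cs; case: ifP => _; apply: hCs.
have := hCc (hF.2 cs csC) Y; rewrite ffunE.
have -> : [ffun i => cs i Y] = pair2 a b.
  apply/ffunP => i; rewrite !ffunE /cs; case: ifP => _; first by rewrite pact_kimg.
  by rewrite -eY pact_kimg permM tpermL.
by rewrite -/(bin h a b) -/z -piw mem_imset ?(negbTE wY0) //; exact: perm_inj.
Qed.

End Conservative.

Section Realizable.
Variables (X : finType) (k : nat) (C : {set {ffun kset X k -> X}}).
Hypothesis hCs : symmetric_family C.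

Definition realizes (h : {ffun 'I_2 -> X} -> X) (S : {set X * X}) :=
  forall x y, x != y -> bin h x y = if (x, y) \in S then y else x.

Definition realizable (S : {set X * X}) := exists2 h, Fr C h & realizes h S.

Lemma realizable_ext (S S' : {set X * X}) :
  (forall x y, x != y -> ((x, y) \in S) = ((x, y) \in S')) -> realizable S -> realizable S'.
Proof. by move=> SS' [h hF hS]; exists h => // x y xy; rewrite hS // SS'. Qed.

Lemma realizableT : realizable setT.
Proof.
by exists (fun x => x ord_max); [exact: Fr_proj | move=> x y _; rewrite inE /bin ffunE /=].
Qed.

Lemma realizableI (S1 S2 : {set X * X}) :
  realizable S1 -> realizable S2 -> realizable (S1 :&: S2).
Proof.
move=> [h1 h1F h1S] [h2 h2F h2S].
exists (fun x => bin h1 (x ord0) (bin h2 (x ord0) (x ord_max))).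
  by apply: Fr_bin => //; [exact: Fr_proj | apply: Fr_bin => //; exact: Fr_proj].
move=> x y xy; rewrite {1}/bin !ffunE /= h2S // inE.
by case: ((x, y) \in S2); rewrite ?andbT ?andbF ?(bin_idem _ h1F) ?h1S.
Qed.

Lemma realizableU (S1 S2 : {set X * X}) :
  realizable S1 -> realizable S2 -> realizable (S1 :|: S2).
Proof.
move=> [h1 h1F h1S] [h2 h2F h2S].
exists (fun x => bin h1 (bin h2 (x ord0) (x ord_max)) (x ord_max)).
  by apply: Fr_bin => //; [apply: Fr_bin => //; exact: Fr_proj | exact: Fr_proj].
move=> x y xy; rewrite {1}/bin !ffunE /= h2S // inE.
by case: ((x, y) \in S2); rewrite ?orbT ?orbF ?(bin_idem _ h1F) ?h1S.
Qed.

Lemma realizable_dual (S : {set X * X}) :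
  realizable S -> realizable [set xy | (xy.2, xy.1) \notin S].
Proof.
move=> [h hF hS]; exists (fun x => bin h (x ord_max) (x ord0)).
  by apply: Fr_bin => //; exact: Fr_proj.
move=> x y xy; rewrite {1}/bin !ffunE /= hS 1?eq_sym // inE /=.
by case: ((y, x) \in S).
Qed.

Lemma realizable_conj (p : {perm X}) (S : {set X * X}) :
  realizable S -> realizable [set xy | (p xy.1, p xy.2) \in S].
Proof.
move=> [h hF hS]; exists (fun x => (p^-1)%g (h [ffun i => p (x i)])); first exact: Fr_conj.
move=> x y xy; rewrite inE /bin.
have -> : [ffun i => p (pair2 x y i)] = pair2 (p x) (p y).
  by apply/ffunP => i; rewrite !ffunE; case: ifP.
by rewrite -/(bin h _ _) hS ?(inj_eq perm_inj) //; case: ifP; rewrite permK.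
Qed.

Lemma realizable_bigcap (I : finType) (P : pred I) (F : I -> {set X * X}) :
  (forall i, P i -> realizable (F i)) -> realizable (\bigcap_(i | P i) F i).
Proof. by move=> FR; apply: big_ind => //; [exact: realizableT | exact: realizableI]. Qed.

End Realizable.

Definition orbit_rev o := nth 6 [:: 1; 0; 3; 2; 5; 4] o.

Definition orbit_swap o := nth 6 [:: 1; 0; 4; 5; 2; 3] o.

Definition orbit_shift o (zx zy : bool) :=
  match o with
  | 0 => 2 | 1 => 3
  | 2 => if zy then 0 else 2
  | 3 => if zx then 1 else 3
  | 4 => if zy then 5 else 6
  | 5 => if zx then 4 else 6
  | _ => if zx then 4 else if zy then 5 else 6
  end.

Section Orbits.
Variables (X : finType) (p q : X).
Hypothesis pq : p != q.

Definition pq_class (x : X) : nat := index x [:: p; q].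

(* Orbits of the stabiliser of [p] and [q] on pairs of distinct points, [w], [w'] standing
   for points outside [{p, q}]: 0 (p,q), 1 (q,p), 2 (p,w), 3 (w,p), 4 (q,w), 5 (w,q),
   6 (w,w'). *)
Definition orbit_code (i j : nat) : nat :=
  match i, j with
  | 0, 1 => 0 | 1, 0 => 1 | 0, _ => 2 | _, 0 => 3 | 1, _ => 4 | _, 1 => 5 | _, _ => 6
  end.

Definition orbit_of (x y : X) := orbit_code (pq_class x) (pq_class y).

Lemma orbit_lt7 x y : orbit_of x y < 7.
Proof. by rewrite /orbit_of; case: (pq_class x) => [|[|?]]; case: (pq_class y) => [|[|?]]. Qed.

Lemma pq_class_lt3 x : pq_class x < 3.
Proof. by rewrite ltnS index_size. Qed.

Lemma pq_class_p x : (pq_class x == 0) = (x == p).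
Proof. by rewrite /pq_class /= [p == x]eq_sym; case: (x == p). Qed.

Lemma pq_class_q x : (pq_class x == 1) = (x == q).
Proof.
rewrite /pq_class /=; case: (eqVneq p x) => [<-|_]; first by rewrite (negbTE pq).
by rewrite [q == x]eq_sym; case: (x == q).
Qed.

Lemma pq_class_pq : pq_class p = 0 /\ pq_class q = 1.
Proof. by split; apply/eqP; rewrite ?pq_class_p ?pq_class_q. Qed.

Lemma pq_class_outside x : (pq_class x == 2) = (x \notin [:: p; q]).
Proof. by rewrite -index_mem -/(pq_class x) ltn_neqAle -ltnS pq_class_lt3 andbT negbK. Qed.

Lemma pq_class_inj x x' : pq_class x = pq_class x' -> x \in [:: p; q] -> x = x'.
Proof.
move=> e xs; have x's : x' \in [:: p; q] by rewrite -index_mem -/(pq_class x') -e index_mem.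
by rewrite -(nth_index x xs) -(nth_index x x's) -/(pq_class x) -/(pq_class x') e.
Qed.

Lemma pq_class_diag x y : x != y -> pq_class x = pq_class y -> pq_class x = 2.
Proof.
move=> xy exy; apply/eqP; rewrite pq_class_outside.
by apply: contraNN xy => /(pq_class_inj exy) ->.
Qed.

Lemma pq_class_eq x x' u :
  pq_class x = pq_class x' -> u \in [:: p; q] -> (x == u) = (x' == u).
Proof.
move=> e us; apply/eqP/eqP => [xu|x'u].
  by rewrite -(pq_class_inj e) // xu.
by rewrite -(pq_class_inj (esym e)) // x'u.
Qed.

Lemma pq_class_swap x : pq_class (tperm p q x) = nth 2 [:: 1; 0] (pq_class x).
Proof.
have [cp cq] := pq_class_pq; case: tpermP => [->|->|/eqP xp /eqP xq]; rewrite ?cp ?cq //.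
by have /eqP -> : pq_class x == 2 by rewrite pq_class_outside !inE negb_or xp xq.
Qed.

Lemma pq_class_shift z x : z \notin [:: p; q] ->
  pq_class (tperm q z x) = if pq_class x == 1 then 2 else if z == x then 1 else pq_class x.
Proof.
rewrite -pq_class_outside => /eqP cz; have [_ cq] := pq_class_pq.
case: tpermP => [->|->|/eqP xq /eqP xz]; rewrite ?cz ?cq ?eqxx //.
by rewrite pq_class_q (negbTE xq) eq_sym (negbTE xz).
Qed.

Lemma orbit_of_rev x y : x != y -> orbit_of y x = orbit_rev (orbit_of x y).
Proof.
move=> xy; rewrite /orbit_of; move: (pq_class_diag xy) (pq_class_lt3 x) (pq_class_lt3 y).
by case: (pq_class x) => [|[|[|//]]]; case: (pq_class y) => [|[|[|//]]] // /(_ erefl).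
Qed.

Lemma orbit_of_swap x y : x != y ->
  orbit_of (tperm p q x) (tperm p q y) = orbit_swap (orbit_of x y).
Proof.
move=> xy; rewrite /orbit_of !pq_class_swap.
move: (pq_class_diag xy) (pq_class_lt3 x) (pq_class_lt3 y).
by case: (pq_class x) => [|[|[|//]]]; case: (pq_class y) => [|[|[|//]]] // /(_ erefl).
Qed.

Lemma orbit_of_shift z x y : z \notin [:: p; q] -> x != y ->
  orbit_of (tperm q z x) (tperm q z y) = orbit_shift (orbit_of x y) (z == x) (z == y).
Proof.
move=> zpq xy; rewrite /orbit_of !pq_class_shift //.
have zx2 : z == x -> pq_class x = 2 by move/eqP <-; apply/eqP; rewrite pq_class_outside.
have zy2 : z == y -> pq_class y = 2 by move/eqP <-; apply/eqP; rewrite pq_class_outside.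
have zxy : ~~ ((z == x) && (z == y)) by apply: contra xy => /andP[/eqP <- /eqP <-].
move: (pq_class_diag xy) (pq_class_lt3 x) (pq_class_lt3 y) zx2 zy2 zxy.
case: (z == x); case: (z == y) => //=;
  case: (pq_class x) => [|[|[|//]]]; case: (pq_class y) => [|[|[|//]]] //;
  by [move=> /(_ erefl) | move=> _ _ _ /(_ erefl) | move=> _ _ _ _ /(_ erefl)].
Qed.

Lemma orbit_of_outside x y : x != y ->
  [/\ (orbit_of x y \in [:: 3; 5; 6]) = (x \notin [:: p; q])
    & (orbit_of x y \in [:: 2; 4; 6]) = (y \notin [:: p; q])].
Proof.
move=> xy; rewrite /orbit_of -!pq_class_outside.
move: (pq_class_diag xy) (pq_class_lt3 x) (pq_class_lt3 y).
by case: (pq_class x) => [|[|[|//]]]; case: (pq_class y) => [|[|[|//]]] // /(_ erefl).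
Qed.

Lemma orbit_of_inj x y x' y' : x != y -> x' != y' -> orbit_of x y = orbit_of x' y' ->
  pq_class x = pq_class x' /\ pq_class y = pq_class y'.
Proof.
move=> xy xy'; rewrite /orbit_of.
move: (pq_class_diag xy) (pq_class_diag xy') (pq_class_lt3 x) (pq_class_lt3 y)
  (pq_class_lt3 x') (pq_class_lt3 y').
case: (pq_class x) => [|[|[|//]]]; case: (pq_class y) => [|[|[|//]]];
  case: (pq_class x') => [|[|[|//]]]; case: (pq_class y') => [|[|[|//]]] //;
  by [move=> /(_ erefl) | move=> _ /(_ erefl)].
Qed.

Lemma orbit_transitive x y x' y' : x != y -> x' != y' -> orbit_of x y = orbit_of x' y' ->
  exists s : {perm X}, [/\ s x = x', s y = y', s p = p & s q = q].
Proof.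
move=> xy xy' /(orbit_of_inj xy xy')[ex ey].
have [|s [sx sy sF]] := @tperm2_fix _ (mem [:: p; q]) _ _ _ _ xy xy'.
  by move=> u us; rewrite (pq_class_eq ex us) (pq_class_eq ey us).
by exists s; split; rewrite // sF // !inE eqxx ?orbT.
Qed.

Lemma orbit_of_pq : orbit_of p q = 0.
Proof. by have [cp cq] := pq_class_pq; rewrite /orbit_of cp cq. Qed.

Lemma orbit_code_lt2 i j :
  (orbit_code i j < 2) = ((i == 0) && (j == 1)) || ((i == 1) && (j == 0)).
Proof. by case: i => [|[|i]]; case: j => [|[|j]]. Qed.

Lemma orbit_of_lt2 x y : (orbit_of x y < 2) = ((x, y) \in [:: (p, q); (q, p)]).
Proof. by rewrite /orbit_of orbit_code_lt2 !pq_class_p !pq_class_q !inE !xpair_eqE. Qed.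

End Orbits.

Definition bit (b : seq bool) i := nth false b i.

Definition code (P : pred nat) : seq bool := mkseq P 7.

Lemma bit_code P i : i < 7 -> bit (code P) i = P i.
Proof. by move=> i7; rewrite /bit nth_mkseq. Qed.

Definition code_dual b := code (fun o => ~~ bit b (orbit_rev o)).
Definition code_swap b := code (fun o => bit b (orbit_swap o)).
(* The intersection over [z] outside [{p, q}] of the conjugates by [tperm q z]: [z] can be
   the first point of a pair only in orbits 3, 5, 6 and the second only in orbits 2, 4, 6. *)
Definition code_shift b := code (fun o =>
  [&& bit b (orbit_shift o false false),
      (o \in [:: 3; 5; 6]) ==> bit b (orbit_shift o true false) &
      (o \in [:: 2; 4; 6]) ==> bit b (orbit_shift o false true)]).
Definition code_or b c := code (fun o => bit b o || bit c o).
Definition code_and b c := code (fun o => bit b o && bit c o).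

Definition pq_code := code (fun o => o < 2).

Definition successors b done :=
  [:: code_dual b, code_swap b, code_shift b
    & [seq code_or b c | c <- done] ++ [seq code_and b c | c <- done]].
Arguments successors : simpl never.

(* The early exit is an [if] rather than [||]: under call-by-value evaluation [||] would
   force the rest of the search. *)
Fixpoint reach n (done todo : seq (seq bool)) : bool :=
  if n is n'.+1 then
    if todo is b :: todo' then
      if b == pq_code then true else
      if b \in done then reach n' done todo' else
      reach n' (b :: done) (todo' ++ successors b (b :: done))
    else false
  else false.

Lemma reach_pq_code b : size b = 7 -> bit b 0 -> false \in b -> reach 2000 [::] [:: b].
Proof.
case: b => [|b0 [|b1 [|b2 [|b3 [|b4 [|b5 [|b6 []]]]]]]] // _.
by case: b0; case: b1; case: b2; case: b3; case: b4; case: b5; case: b6; vm_compute.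
Qed.

Section CodeRealizable.
Variables (X : finType) (k : nat) (C : {set {ffun kset X k -> X}}).
Hypothesis hCs : symmetric_family C.
Variables (p q : X).
Hypotheses (pq : p != q) (hX : 4 < #|X|).

Definition orbits (b : seq bool) : {set X * X} :=
  [set xy | bit b (orbit_of p q xy.1 xy.2)].

Definition code_realizable b := realizable C (orbits b).

Lemma bit_orbit_code P x y : bit (code P) (orbit_of p q x y) = P (orbit_of p q x y).
Proof. exact/bit_code/orbit_lt7. Qed.

Lemma code_realizable_dual b : code_realizable b -> code_realizable (code_dual b).
Proof.
move/realizable_dual; apply: realizable_ext => x y xy.
by rewrite !inE /= bit_orbit_code orbit_of_rev.
Qed.

Lemma code_realizable_swap b : code_realizable b -> code_realizable (code_swap b).
Proof.
move/(realizable_conj hCs (tperm p q)); apply: realizable_ext => x y xy.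
by rewrite !inE /= bit_orbit_code orbit_of_swap.
Qed.

Lemma code_realizable_or b c :
  code_realizable b -> code_realizable c -> code_realizable (code_or b c).
Proof.
move=> Rb Rc; apply: realizable_ext (realizableU Rb Rc) => x y _.
by rewrite !inE /= bit_orbit_code.
Qed.

Lemma code_realizable_and b c :
  code_realizable b -> code_realizable c -> code_realizable (code_and b c).
Proof.
move=> Rb Rc; apply: realizable_ext (realizableI Rb Rc) => x y _.
by rewrite !inE /= bit_orbit_code.
Qed.

Lemma code_realizable_shift b : code_realizable b -> code_realizable (code_shift b).
Proof.
move=> Rb; apply: realizable_ext (realizable_bigcap (P := fun z => z \notin [:: p; q])
  (fun z _ => realizable_conj hCs (tperm q z) Rb)) => x y xy.
have shiftE z : z \notin [:: p; q] ->
    ((x, y) \in [set uv | (tperm q z uv.1, tperm q z uv.2) \in orbits b])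
    = bit b (orbit_shift (orbit_of p q x y) (z == x) (z == y)).
  by move=> zpq; rewrite !inE /= orbit_of_shift.
have [out_x out_y] := orbit_of_outside p q xy.
have yx : (y == x) = false by apply/negbTE; rewrite eq_sym.
rewrite in_set bit_orbit_code /= out_x out_y.
apply/bigcapP/and3P => [H|[H0 /implyP Hx /implyP Hy] z zpq].
  have [z /[!inE] /[!negb_or] /and4P[zx zy zp zq]] : exists z, z \notin [:: x; y; p; q].
    by apply: exists_notin; exact: leq_trans hX.
  split; last 2 first.
  - apply/implyP => xpq; have {}xpq : x \notin [:: p; q] by rewrite !inE negb_or.
    by have := H x xpq; rewrite shiftE // eqxx (negbTE xy).
  - apply/implyP => ypq; have {}ypq : y \notin [:: p; q] by rewrite !inE negb_or.
    by have := H y ypq; rewrite shiftE // eqxx yx.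
  have zpq : z \notin [:: p; q] by rewrite !inE negb_or zp zq.
  by have := H z zpq; rewrite shiftE // (negbTE zx) (negbTE zy).
rewrite shiftE //; case: (eqVneq z x) => [zx|_].
  by rewrite zx (negbTE xy) Hx // -zx.
by case: (eqVneq z y) => [zy|_] //; rewrite Hy // -zy.
Qed.

Lemma code_realizable_successors b done : code_realizable b ->
  {in done, forall c, code_realizable c} -> {in successors b done, forall c, code_realizable c}.
Proof.
move=> Rb Rdone c; rewrite /successors !inE mem_cat.
case/or4P=> [/eqP->|/eqP->|/eqP->|/orP[]/mapP[c' /Rdone Rc' ->]].
- exact: code_realizable_dual.
- exact: code_realizable_swap.
- exact: code_realizable_shift.
- exact: code_realizable_or.
- exact: code_realizable_and.
Qed.

Lemma reach_sound n done todo :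
  {in done, forall b, code_realizable b} -> {in todo, forall b, code_realizable b} ->
  reach n done todo -> code_realizable pq_code.
Proof.
elim: n done todo => [|n IHn] done [|b todo] //= Rdone Rtodo.
have Rb : code_realizable b by apply: Rtodo; rewrite inE eqxx.
have {}Rtodo c : c \in todo -> code_realizable c by move=> ct; apply: Rtodo; rewrite inE ct orbT.
case: eqP => [<- //|_]; case: ifP => _; first exact: IHn.
have Rdone' c : c \in b :: done -> code_realizable c by rewrite inE => /predU1P[->|/Rdone].
apply: IHn => // c; rewrite mem_cat => /orP[/Rtodo //|].
exact: code_realizable_successors.
Qed.

End CodeRealizable.

Section Hull.
Variables (X : finType) (k : nat) (C : {set {ffun kset X k -> X}}).
Hypothesis hCs : symmetric_family C.
Variables (p q : X).
Hypotheses (pq : p != q) (hX : 4 < #|X|).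

Definition pq_hull (S : {set X * X}) :=
  \bigcap_(pi : {perm X} | (pi p, pi q) \in S) [set xy | (pi xy.1, pi xy.2) \in S].

Lemma realizable_pq_hull (S : {set X * X}) : realizable C S -> realizable C (pq_hull S).
Proof. by move=> RS; apply: realizable_bigcap => pi _; apply: realizable_conj. Qed.

Lemma pq_in_hull (S : {set X * X}) : (p, q) \in pq_hull S.
Proof. by apply/bigcapP => pi piS; rewrite inE. Qed.

Lemma pq_hull_stab (S : {set X * X}) (s : {perm X}) x y :
  s p = p -> s q = q -> ((s x, s y) \in pq_hull S) = ((x, y) \in pq_hull S).
Proof.
suff hull_stab (s' : {perm X}) u v :
    s' p = p -> s' q = q -> (u, v) \in pq_hull S -> (s' u, s' v) \in pq_hull S.
  move=> sp sq; apply/idP/idP; last exact: hull_stab.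
  have sVp : (s^-1)%g p = p by rewrite -{1}sp permK.
  have sVq : (s^-1)%g q = q by rewrite -{1}sq permK.
  by move/(hull_stab _ _ _ sVp sVq); rewrite !permK.
move=> sp sq /bigcapP uvS; apply/bigcapP => pi piS.
by have := uvS (s' * pi)%g; rewrite !permM sp sq !inE /= !permM => ->.
Qed.

Lemma pq_hull_proper (S : {set X * X}) a b c d :
  a != b -> (a, b) \in S -> (c, d) \notin S ->
  exists pi : {perm X}, ((pi^-1)%g c, (pi^-1)%g d) \notin pq_hull S.
Proof.
move=> ab abS cdS; have pq_uniq : uniq [:: p; q] by rewrite /= inE pq.
have [|pi [pip piq]] := perm_of_uniq pq_uniq _ (erefl : size [:: p; q] = size [:: a; b]).
  by rewrite /= inE ab.
exists pi; apply: contra cdS => /bigcapP/(_ pi); rewrite pip piq inE /= !permKV; exact.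
Qed.

Definition code_of (S : {set X * X}) :=
  code (fun o => [exists xy in S, (xy.1 != xy.2) && (orbit_of p q xy.1 xy.2 == o)]).

Lemma orbits_code_of (S : {set X * X}) x y :
  (forall (s : {perm X}) u v, s p = p -> s q = q -> ((s u, s v) \in S) = ((u, v) \in S)) ->
  x != y -> ((x, y) \in orbits p q (code_of S)) = ((x, y) \in S).
Proof.
move=> Sstab xy; rewrite inE /= bit_orbit_code; apply/existsP/idP => [[[u v]]|xyS]; last first.
  by exists (x, y); rewrite xyS xy eqxx.
case/and3P=> /= uvS uv /eqP /esym/(orbit_transitive xy uv)[s [sx sy sp sq]].
by rewrite -(Sstab s) // sx sy.
Qed.

Lemma code_realizable_pq_code (S : {set X * X}) a b c d : realizable C S ->
  a != b -> (a, b) \in S -> c != d -> (c, d) \notin S -> code_realizable C p q pq_code.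
Proof.
move=> RS ab abS cd cdS; set H := pq_hull S.
have HE x y : x != y -> ((x, y) \in orbits p q (code_of H)) = ((x, y) \in H).
  exact: orbits_code_of (pq_hull_stab S).
have [pi notH] := pq_hull_proper ab abS cdS.
have cd' : (pi^-1)%g c != (pi^-1)%g d by rewrite (inj_eq perm_inj).
apply: (reach_sound hCs pq hX _ _ (@reach_pq_code (code_of H) _ _ _)).
- by [].
- move=> b'; rewrite inE => /eqP ->.
  by apply: realizable_ext (realizable_pq_hull RS) => x y /HE ->.
- by rewrite size_mkseq.
- by rewrite bit_code //; apply/existsP; exists (p, q); rewrite pq_in_hull pq orbit_of_pq.
have <- : bit (code_of H) (orbit_of p q ((pi^-1)%g c) ((pi^-1)%g d)) = false.
  by apply/negbTE; move: notH; rewrite -HE // inE.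
by apply: mem_nth; rewrite size_mkseq orbit_lt7.
Qed.

End Hull.

Section PairSelect.
Variable T : eqType.

Definition pairsel (u v x y : T) := if (x, y) \in [:: (u, v); (v, u)] then y else x.

Definition pairsel3 (u v x y z : T) := pairsel u v (pairsel u v x y) (pairsel u v z x).

Lemma pairsel3E u v x y z : u != v -> pairsel3 u v x y z =
  if ((x, y) \in [:: (u, v); (v, u)]) && (z \notin [:: u; v]) then y else x.
Proof.
move=> uv; rewrite /pairsel3 /pairsel !inE !xpair_eqE.
case: (eqVneq x u) => [->|xu]; case: (eqVneq y v) => [->|yv];
case: (eqVneq x v) => [xv|xv]; case: (eqVneq y u) => [yu|yu];
case: (eqVneq z u) => [zu|zu]; case: (eqVneq z v) => [zv|zv];
  subst => //=; rewrite ?eqxx /= ?(negbTE uv) ?(negbTE xu) ?(negbTE yv) ?(negbTE xv)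
  ?(negbTE yu) ?(negbTE zu) ?(negbTE zv) //=.
all: rewrite ?eqxx ?andbF ?andbT ?orbF ?orbT //=; try by case: ifP.
Qed.

Lemma pairsel3_moved u v x y z : u != v -> pairsel3 u v x y z != x ->
  [/\ (x, y) \in [:: (u, v); (v, u)], z \notin [:: u; v] & pairsel3 u v x y z = y].
Proof. by move=> uv; rewrite pairsel3E //; case: ifP => [/andP[]|]; rewrite ?eqxx. Qed.

Variables (a1 a2 a3 a4 : T).
Hypotheses (d12 : a1 != a2) (d13 : a1 != a3) (d14 : a1 != a4).
Hypotheses (d24 : a2 != a4) (d34 : a3 != a4).

(* The innermost selector can leave [x3] only towards [x4 = a4], which lets the middle one
   leave [x1 = a1], which in turn lets the outer one move to [x2 = a2]. *)
Definition detect (x1 x2 x3 x4 : T) :=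
  pairsel3 a1 a2 x1 x2 (pairsel3 a1 a4 x1 (pairsel3 a3 a4 x3 x4 x1) x3).

Lemma detect_eq x1 x2 x3 x4 :
  detect x1 x2 x3 x4 != x1 -> [/\ x1 = a1, x2 = a2, x3 = a3 & x4 = a4].
Proof.
rewrite /detect; set w0 := pairsel3 a3 a4 x3 x4 x1; set w := pairsel3 a1 a4 x1 w0 x3.
case/(pairsel3_moved d12) => x12; rewrite !inE negb_or => /andP[wa1 wa2] _.
move: x12; rewrite !inE !xpair_eqE => x12.
have : w != x1 by case/orP: x12 => /andP[/eqP-> _].
case/(pairsel3_moved d14) => x1w0; rewrite !inE negb_or => /andP[x3a1 x3a4] ew.
move: x1w0; rewrite !inE !xpair_eqE => /orP[/andP[/eqP ex1 /eqP ew0]|/andP[/eqP ex1 _]];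
  last by move: x12; rewrite ex1 ![a4 == _]eq_sym (negbTE d14) (negbTE d24).
have ex2 : x2 = a2 by move: x12; rewrite ex1 eqxx (negbTE d12) /= orbF => /eqP.
have : w0 != x3 by rewrite ew0 eq_sym.
case/(pairsel3_moved d34) => x34 _; rewrite -/w0 ew0 => ex4.
move: x34; rewrite !inE !xpair_eqE -ex4 eqxx andbT => /orP[/eqP ex3|/andP[/eqP ex3 _]] //.
by rewrite ex3 eqxx in x3a4.
Qed.

Lemma detect_id : detect a1 a2 a3 a4 = a2.
Proof.
have a1out : a1 \notin [:: a3; a4] by rewrite !inE negb_or d13 d14.
have a3out : a3 \notin [:: a1; a4] by rewrite !inE negb_or eq_sym d13 d34.
have a4out : a4 \notin [:: a1; a2] by rewrite !inE negb_or ![a4 == _]eq_sym d14 d24.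
rewrite /detect (pairsel3E _ _ _ d34) mem_head a1out /=.
by rewrite (pairsel3E _ _ _ d14) mem_head a3out /= (pairsel3E _ _ _ d12) mem_head a4out.
Qed.

End PairSelect.

Lemma Fr_pairsel3 (X : finType) k (C : {set {ffun kset X k -> X}}) r (u v : X)
    (u1 u2 u3 : {ffun 'I_r -> X} -> X) :
  (exists2 h, Fr C h & forall x y, bin h x y = pairsel u v x y) ->
  Fr C u1 -> Fr C u2 -> Fr C u3 -> Fr C (fun x => pairsel3 u v (u1 x) (u2 x) (u3 x)).
Proof.
move=> [h hF hE] F1 F2 F3.
by apply: Fr_ext (Fr_bin hF (Fr_bin hF F1 F2) (Fr_bin hF F3 F1)) => x; rewrite /pairsel3 !hE.
Qed.

Section PairSelectFr.
Variables (X : finType) (k : nat) (C : {set {ffun kset X k -> X}}).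
Hypotheses (hCs : symmetric_family C) (hCc : choice_family C) (hC0 : C != set0).
Hypotheses (hk : 1 < k) (hkX : k < #|X|) (hX : 4 < #|X|).

Lemma bin_monarchy f (i : 'I_2) :
  Fr C f -> (forall a b, a != b -> bin f a b = pair2 a b i) -> monarchy f.
Proof.
move=> fF fi; exists i => x; rewrite (pair2_eta x) -/(bin f _ _).
case: (eqVneq (x ord0) (x ord_max)) => [->|/fi -> //].
by rewrite (bin_idem _ fF) ffunE if_same.
Qed.

Lemma not_monarchy_witness f (i : 'I_2) :
  Fr C f -> ~ monarchy f -> exists a b, a != b /\ bin f a b != pair2 a b i.
Proof.
move=> fF nm; have /existsP[a /existsP[b /andP[ab fab]]] :
    [exists a, exists b, (a != b) && (bin f a b != pair2 a b i)].
  apply: contraT => /existsPn none; exfalso; apply: nm; apply: (bin_monarchy (i := i) fF) => a b ab.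
  by apply/eqP; move/existsPn/(_ b): (none a); rewrite ab /= negbK.
by exists a, b.
Qed.

Lemma Fr_pairsel (f : {ffun 'I_2 -> X} -> X) u v : Fr C f -> ~ monarchy f -> u != v ->
  exists2 h, Fr C h & forall x y, bin h x y = pairsel u v x y.
Proof.
move=> fF nm uv; pose S := [set xy | bin f xy.1 xy.2 == xy.2].
have fcons a b := Fr2_conservative hCs hCc hC0 hk hkX a b fF.
have RS : realizable C S.
  exists f => // x y xy; rewrite inE /=.
  by case: (fcons x y) => ->; rewrite ?eqxx // (negbTE xy).
have [a [b [ab]]] := not_monarchy_witness ord0 fF nm.
have [c [d [cd]]] := not_monarchy_witness ord_max fF nm.
rewrite !ffunE /= => fcd fab.
have abS : (a, b) \in S by rewrite inE; case: (fcons a b) fab => ->; rewrite ?eqxx.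
have cdS : (c, d) \notin S by rewrite inE; case: (fcons c d) fcd => ->; rewrite ?eqxx.
have [h hF hS] := code_realizable_pq_code hCs uv hX RS ab abS cd cdS.
exists h => // x y; have [<-|xy] := eqVneq x y.
  by rewrite (bin_idem _ hF) /pairsel if_same.
by rewrite hS // inE /= bit_orbit_code orbit_of_lt2.
Qed.

End PairSelectFr.

Lemma ffun4_eq (T : Type) (x y : {ffun 'I_4 -> T}) :
  x ord0 = y ord0 -> x (inord 1) = y (inord 1) -> x (inord 2) = y (inord 2) ->
  x (inord 3) = y (inord 3) -> x = y.
Proof.
move=> e0 e1 e2 e3; apply/ffunP => i; rewrite -(inord_val i).
case: i => [[|[|[|[|//]]]] ?] //=; rewrite (_ : inord 0 = ord0) //.
by apply: val_inj; rewrite /= inordK.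
Qed.

Theorem claim13p7 (X : finType) (k : nat)
  (C : {set {ffun kset X k -> X}})
  (hX : 5 <= #|X|) (hk1 : 5 < k) (hk2 : k < #|X| - 5)
  (hCc : choice_family C) (hC0 : C != set0) (hCs : symmetric_family C)
  (hr : rF_eq C 2)
  (astar : {ffun 'I_4 -> X}) (ha : injective astar) :
  exists g : {ffun 'I_4 -> X} -> X,
    Fr C g /\
    (forall b : {ffun 'I_4 -> X}, ~ injective b -> g b = b ord0) /\
    g astar = astar (inord 1).
Proof.
have hk : 1 < k by exact: leq_trans hk1.
have hkX : k < #|X| by exact: leq_trans hk2 (leq_subr _ _).
have [[f [fF nm]] _] := hr.
have hsel u v : u != v -> exists2 h, Fr C h & forall x y, bin h x y = pairsel u v x y.
  exact: (Fr_pairsel hCs hCc hC0 hk hkX hX fF nm).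
pose i1 : 'I_4 := inord 1; pose i2 : 'I_4 := inord 2; pose i3 : 'I_4 := inord 3.
have dstar (i j : 'I_4) : val i != val j -> astar i != astar j.
  by rewrite (inj_eq ha) -(inj_eq val_inj).
have d12 : astar ord0 != astar i1 by apply: dstar; rewrite /= inordK.
have d13 : astar ord0 != astar i2 by apply: dstar; rewrite /= inordK.
have d14 : astar ord0 != astar i3 by apply: dstar; rewrite /= inordK.
have d24 : astar i1 != astar i3 by apply: dstar; rewrite /= !inordK.
have d34 : astar i2 != astar i3 by apply: dstar; rewrite /= !inordK.
pose g x := detect (astar ord0) (astar i1) (astar i2) (astar i3) (x ord0) (x i1) (x i2) (x i3).
exists g; split; [|split].
- apply: Fr_pairsel3 (hsel _ _ d12) _ _ _; try exact: Fr_proj.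
  apply: Fr_pairsel3 (hsel _ _ d14) _ _ _; try exact: Fr_proj.
  by apply: Fr_pairsel3 (hsel _ _ d34) _ _ _; exact: Fr_proj.
- move=> b nb; apply/eqP; apply: contraT => /(detect_eq d12 d14 d24 d34)[e0 e1 e2 e3].
  by case: nb; rewrite (ffun4_eq e0 e1 e2 e3).
- exact: detect_id.
Qed.
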